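(* Let $\mathcal{H}_S$ (system) and $\mathcal{H}_B$ (bath) be Hilbert spaces (with all traces below finite, e.g. finite-dimensional). Let $H_S(s)$, $s\in[0,t]$, be a (possibly time-dependent) self-adjoint system Hamiltonian, $H_B$ a time-independent self-adjoint bath Hamiltonian, and $U_t$ any unitary on $\mathcal{H}_S\otimes\mathcal{H}_B$ (the evolution generated by $H_{\rm tot}(s)=H_S(s)\otimes\mathbb{1}_B+\mathbb{1}_S\otimes H_B+V(s)$ with an arbitrary interaction $V$). Fix $\beta>0$ and set $Z_S(s)={\rm Tr}[e^{-\beta H_S(s)}]$, $\tau_S(s)=e^{-\beta H_S(s)}/Z_S(s)$, $Z_B={\rm Tr}[e^{-\beta H_B}]$, $\tau_B=e^{-\beta H_B}/Z_B$, and $F_S(s)=-\beta^{-1}\ln Z_S(s)$, $\Delta F_S=F_S(t)-F_S(0)$. Let $\{|\epsilon\rangle\}$ be an orthonormal eigenbasis of $H_S(0)$, with $|\epsilon\rangle$ having eigenvalue $\epsilon$ (sums over $\epsilon$ run over this basis). Define the CPTP map $\Phi_t(\rho)={\rm Tr}_B[U_t(\rho\otimes\tau_B)U_t^\dagger]$, the trajectory energy change $\Delta\tilde E(\epsilon)={\rm Tr}[H_S(t)\Phi_t(|\epsilon\rangle\langle\epsilon|)]-\epsilon$, $\tilde Z_S(t)=\sum_\epsilon e^{-\beta{\rm Tr}[H_S(t)\Phi_t(|\epsilon\rangle\langle\epsilon|)]}$, the guessed state $$\Theta_{SB}(t)=\sum_\epsilon \frac{e^{-\beta{\rm Tr}[H_S(t)\Phi_t(|\epsilon\rangle\langle\epsilon|)]}}{\tilde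 Z_S(t)}\,U_t(|\epsilon\rangle\langle\epsilon|\otimes\tau_B)U_t^\dagger,$$ the guessed quantum heat $\langle\tilde Q\rangle_B={\rm Tr}[H_B\tau_B]-{\rm Tr}[(\mathbb{1}_S\otimes H_B)\Theta_{SB}(t)]$, and for each $\epsilon$ the guessed quantum work $\tilde W(\epsilon)=\Delta\tilde E(\epsilon)-\langle\tilde Q\rangle_B$. Writing $\langle f\rangle_{\tilde P}=\sum_\epsilon \frac{e^{-\beta\epsilon}}{Z_S(0)} f(\epsilon)$, one has $$\langle e^{-\beta\tilde W}\rangle_{\tilde P}=e^{-\beta\Delta F_S}\,e^{-D[\Theta_{SB}(t)\|\tau_S(t)\otimes\tau_B]},$$ where $D[\rho\|\sigma]={\rm Tr}[\rho\ln\rho]-{\rm Tr}[\rho\ln\sigma]$ is the quantum relative entropy.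
   Context: Physical interpretation: the system starts in $\tau_S(0)$ and the bath in $\tau_B$; an initial projective energy measurement of the system yields $\epsilon$ with probability $e^{-\beta\epsilon}/Z_S(0)$, after which the joint state $|\epsilon\rangle\langle\epsilon|\otimes\tau_B$ evolves under $U_t$. The average $\langle\cdot\rangle_{\tilde P}$ is with respect to the distribution $\tilde P(\Delta E)=\sum_\epsilon \frac{e^{-\beta\epsilon}}{Z_S(0)}\delta(\Delta E-\Delta\tilde E(\epsilon))$. The quantity $\langle\tilde Q\rangle_B$ is a constant (independent of $\epsilon$). *)

From HB Require Import structures.
From mathcomp Require Import all_boot all_order all_algebra.
From mathcomp Require Import complex mxtens.
From mathcomp Require Import all_classical all_reals.
From mathcomp Require Import all_analysis.
Set Implicit Arguments. Unset Strict Implicit. Unset Printing Implicit Defensive.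
Import Order.TTheory GRing.Theory Num.Theory Num.Def ComplexField.
Local Open Scope ring_scope.
Local Open Scope complex_scope.

Section QDefs.
Variable R : realType.
Local Notation C := R[i].

Definition adjmx p q (A : 'M[C]_(p, q)) : 'M[C]_(q, p) := map_mx conjC A^T.

(* Functional calculus for a Hermitian (normal) matrix A = P^-1 diag(d) P with
   P unitary (the spectral decomposition of mathcomp's spectral.v):
   f(A) := P^-1 diag(f(d)) P.  The eigenvalues of a Hermitian matrix are real,
   so f is applied to their real parts. *)
Definition funm (f : R -> R) n (A : 'M[C]_n) : 'M[C]_n :=
  invmx (spectralmx A) *m
  diag_mx (map_mx (fun z : C => (f (complex.Re z))%:C) (spectral_diag A)) *m
  spectralmx A.

Definition mexp n (A : 'M[C]_n) : 'M[C]_n := funm expR A.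
Definition mln n (A : 'M[C]_n) : 'M[C]_n := funm (@ln R) A.

(* Real part of the trace (all traces below are traces of products of
   Hermitian matrices and hence real). *)
Definition trR n (A : 'M[C]_n) : R := complex.Re (\tr A).

Definition ptrB n m (X : 'M[C]_(n * m)) : 'M[C]_n :=
  \matrix_(i, j) \sum_(k < m) X (mxtens_index (i, k)) (mxtens_index (j, k)).

Definition partZ (beta : R) n (H : 'M[C]_n) : R := trR (mexp ((- beta)%:C *: H)).
Definition gibbs (beta : R) n (H : 'M[C]_n) : 'M[C]_n :=
  ((partZ beta H)^-1)%:C *: mexp ((- beta)%:C *: H).

Definition freeEnergy (beta : R) n (H : 'M[C]_n) : R := - beta^-1 * @ln R (partZ beta H).

Definition relent n (rho sigma : 'M[C]_n) : R :=
  trR (rho *m mln rho) - trR (rho *m mln sigma).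

Definition Phi (beta : R) n m (HB : 'M[C]_m) (U : 'M[C]_(n * m)) (rho : 'M[C]_n)
  : 'M[C]_n := ptrB (U *m (rho *t gibbs beta HB) *m adjmx U).

Definition ketbra n (e : 'cV[C]_n) : 'M[C]_n := e *m adjmx e.

Definition Efin (beta : R) n m (Ht : 'M[C]_n) (HB : 'M[C]_m) (U : 'M[C]_(n * m))
  (e : 'I_n -> 'cV[C]_n) (i : 'I_n) : R :=
  trR (Ht *m Phi beta HB U (ketbra (e i))).

Definition Ztil (beta : R) n m (Ht : 'M[C]_n) (HB : 'M[C]_m) (U : 'M[C]_(n * m))
  (e : 'I_n -> 'cV[C]_n) : R :=
  \sum_(i < n) expR (- beta * Efin beta Ht HB U e i).

Definition Theta (beta : R) n m (Ht : 'M[C]_n) (HB : 'M[C]_m) (U : 'M[C]_(n * m))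
  (e : 'I_n -> 'cV[C]_n) : 'M[C]_(n * m) :=
  \sum_(i < n) (expR (- beta * Efin beta Ht HB U e i) / Ztil beta Ht HB U e)%:C *:
     (U *m (ketbra (e i) *t gibbs beta HB) *m adjmx U).

Definition Qtil (beta : R) n m (Ht : 'M[C]_n) (HB : 'M[C]_m) (U : 'M[C]_(n * m))
  (e : 'I_n -> 'cV[C]_n) : R :=
  trR (HB *m gibbs beta HB) - trR ((1%:M *t HB) *m Theta beta Ht HB U e).

Definition dEtil (beta : R) n m (Ht : 'M[C]_n) (HB : 'M[C]_m) (U : 'M[C]_(n * m))
  (e : 'I_n -> 'cV[C]_n) (eps : 'I_n -> R) (i : 'I_n) : R :=
  Efin beta Ht HB U e i - eps i.
Definition Wtil (beta : R) n m (Ht : 'M[C]_n) (HB : 'M[C]_m) (U : 'M[C]_(n * m))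
  (e : 'I_n -> 'cV[C]_n) (eps : 'I_n -> R) (i : 'I_n) : R :=
  dEtil beta Ht HB U e eps i - Qtil beta Ht HB U e.

End QDefs.

From HB Require Import structures.
From mathcomp Require Import all_boot all_order all_algebra.
From mathcomp Require Import complex mxtens.
From mathcomp Require Import all_classical all_reals all_analysis.
From mathcomp Require Import ring lra.
Import Order.TTheory GRing.Theory Num.Theory Num.Def ComplexField.
Local Open Scope ring_scope.
Local Open Scope complex_scope.
Set Implicit Arguments. Unset Strict Implicit.

(* Everything is diagonal in suitable unitary frames.  With
   E_eps = Tr[H_S(t) Phi_t(|eps><eps|)], p_eps = e^{-beta E_eps} / Z~ and
   rho~ = sum_eps p_eps |eps><eps|, the guessed state is
   Theta = U (rho~ (x) tau_B) U^dagger, so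
   ln Theta = U (ln rho~ (x) 1 + 1 (x) ln tau_B) U^dagger, while
   ln (tau_S(t) (x) tau_B) = - beta (H_S(t) (x) 1 + 1 (x) H_B) - ln (Z_S(t) Z_B).
   Tracing against Theta, whose H_S(t)-energy is sum_eps p_eps E_eps, the
   relative entropy collapses to D = ln Z_S(t) - ln Z~ - beta <Q~>_B.  On the
   other side, the e^{-beta eps} cancel in
   <e^{-beta W~}> = e^{beta <Q~>_B} Z~ / Z_S(0), and
   e^{-beta Delta F_S} = Z_S(t) / Z_S(0). *)

Lemma psumr_gt0 (R : numDomainType) n (F : 'I_n -> R) :
  (0 < n)%N -> (forall i, 0 < F i) -> 0 < \sum_i F i.
Proof.
move=> n0 F_gt0; rewrite (bigD1 (Ordinal n0)) //= ltr_pwDl //.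
by apply: sumr_ge0 => i _; apply/ltW.
Qed.

Section TensorProduct.
Variable K : comPzRingType.

Lemma big_mxtens_index n m (F : 'I_(n * m) -> K) :
  \sum_k F k = \sum_(i < n) \sum_(j < m) F (mxtens_index (i, j)).
Proof.
rewrite pair_big (reindex (@mxtens_index n m)) /=; last first.
  by exists (@mxtens_unindex n m) => k _; rewrite (mxtens_indexK, mxtens_unindexK).
by apply: eq_bigr => -[i j].
Qed.

Lemma eq_mxtens_index n m (i i' : 'I_n) (j j' : 'I_m) :
  (mxtens_index (i, j) == mxtens_index (i', j')) = (i == i') && (j == j').
Proof. by rewrite (inj_eq (can_inj (@mxtens_indexK n m))) xpair_eqE. Qed.

Lemma mxtrace_tens n m (A : 'M[K]_n) (B : 'M[K]_m) : \tr (A *t B) = \tr A * \tr B.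
Proof.
rewrite /mxtrace big_mxtens_index mulr_suml; apply: eq_bigr => i _.
by rewrite mulr_sumr; apply: eq_bigr => j _; rewrite tensmxE.
Qed.

Lemma tensmxDl n m p q (A A' : 'M[K]_(n, m)) (B : 'M[K]_(p, q)) :
  (A + A') *t B = A *t B + A' *t B.
Proof. by apply/matrixP => k l; rewrite !mxE mulrDl. Qed.

Lemma tensmxDr n m p q (A : 'M[K]_(n, m)) (B B' : 'M[K]_(p, q)) :
  A *t (B + B') = A *t B + A *t B'.
Proof. by apply/matrixP => k l; rewrite !mxE mulrDr. Qed.

Lemma tensmxZl n m p q c (A : 'M[K]_(n, m)) (B : 'M[K]_(p, q)) :
  (c *: A) *t B = c *: (A *t B).
Proof. by apply/matrixP => k l; rewrite !mxE mulrA. Qed.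

Lemma tensmxZr n m p q c (A : 'M[K]_(n, m)) (B : 'M[K]_(p, q)) :
  A *t (c *: B) = c *: (A *t B).
Proof. by apply/matrixP => k l; rewrite !mxE mulrCA. Qed.

Lemma tensmx_suml I (r : seq I) (P : pred I) n m p q (F : I -> 'M[K]_(n, m))
  (B : 'M[K]_(p, q)) :
  (\sum_(i <- r | P i) F i) *t B = \sum_(i <- r | P i) (F i *t B).
Proof. by elim/big_rec2: _ => [|i x y _ <-]; rewrite ?tens0mx ?tensmxDl. Qed.

Lemma tensmx11 n m : (1%:M : 'M[K]_n) *t (1%:M : 'M[K]_m) = 1%:M.
Proof.
apply/matrixP => k l.
case: (mxtens_indexP k) => i j; case: (mxtens_indexP l) => i' j'.
by rewrite tensmxE !mxE eq_mxtens_index; case: (i == i'); case: (j == j');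
  rewrite /= ?mulr1n ?mulr0n ?mulr1 ?mulr0.
Qed.

End TensorProduct.

Lemma map_diag_conj (F : fieldType) n (g : F -> F) (P V : 'M[F]_n) (s d : 'rV[F]_n) :
  P \in unitmx -> V \in unitmx ->
  invmx P *m diag_mx s *m P = invmx V *m diag_mx d *m V ->
  invmx P *m diag_mx (map_mx g s) *m P = invmx V *m diag_mx (map_mx g d) *m V.
Proof.
move=> Pu Vu eqA.
(* Anything intertwining [diag s] and [diag d] only links entries with [s i = d j]. *)
have map_intertw (T : 'M[F]_n) : diag_mx s *m T = T *m diag_mx d ->
    diag_mx (map_mx g s) *m T = T *m diag_mx (map_mx g d).
  move=> sT; apply/matrixP => i j; move/matrixP/(_ i j): sT.
  rewrite !mul_diag_mx !mul_mx_diag !mxE => sTij.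
  have [->|Tij] := eqVneq (T i j) 0; first by rewrite mulr0 mul0r.
  suff -> : s 0 i = d 0 j by rewrite mulrC.
  by apply: (mulIf Tij); rewrite sTij mulrC.
have /map_intertw gT : diag_mx s *m (P *m invmx V) = (P *m invmx V) *m diag_mx d.
  have := congr1 (fun X => P *m X *m invmx V) eqA => /=.
  by rewrite !mulmxA mulmxV // mul1mx -!mulmxA mulmxV // mulmx1.
have -> : invmx P *m diag_mx (map_mx g s) *m P
    = invmx P *m (diag_mx (map_mx g s) *m (P *m invmx V)) *m V.
  by rewrite !mulmxA mulmxKV.
by rewrite gT !mulmxA mulVmx // mul1mx.
Qed.

Section FunctionalCalculus.
Variable R : realType.
Local Notation C := R[i].

Lemma adjmx_mul p q r (A : 'M[C]_(p, q)) (B : 'M[C]_(q, r)) :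
  adjmx (A *m B) = adjmx B *m adjmx A.
Proof. by rewrite /adjmx trmx_mul map_mxM. Qed.

Lemma adjmxK p q (A : 'M[C]_(p, q)) : adjmx (adjmx A) = A.
Proof. exact: trmxCK. Qed.

Lemma adjmx_tens p q r s (A : 'M[C]_(p, q)) (B : 'M[C]_(r, s)) :
  adjmx (A *t B) = adjmx A *t adjmx B.
Proof. by rewrite /adjmx trmx_tens map_mxT. Qed.

Lemma unitarymx_adjK n (P : 'M[C]_n) : P \is unitarymx -> adjmx P *m P = 1%:M.
Proof. by move=> PU; have := mulmxKtV 1%:M PU erefl; rewrite mul1mx. Qed.

Lemma unitarymx_Kadj n (P : 'M[C]_n) : P \is unitarymx -> P *m adjmx P = 1%:M.
Proof. by move/unitarymxP. Qed.

Lemma adjmx_unitary n (P : 'M[C]_n) : P \is unitarymx -> adjmx P \is unitarymx.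
Proof. by rewrite -trmxC_unitary. Qed.

Lemma mxtrace_unitary_conj n (P X : 'M[C]_n) :
  P \is unitarymx -> \tr (adjmx P *m X *m P) = \tr X.
Proof. by move=> PU; rewrite mxtrace_mulC mulmxA unitarymx_Kadj // mul1mx. Qed.

Lemma unitary_conjM n (P X Y : 'M[C]_n) : P \is unitarymx ->
  (adjmx P *m X *m P) *m (adjmx P *m Y *m P) = adjmx P *m (X *m Y) *m P.
Proof. by move=> PU; rewrite !mulmxA -(mulmxA _ P) unitarymx_Kadj // mulmx1. Qed.

Lemma tensmx_unitary n m (P : 'M[C]_n) (Q : 'M[C]_m) :
  P \is unitarymx -> Q \is unitarymx -> P *t Q \is unitarymx.
Proof.
move=> /unitarymxP PU /unitarymxP QU; apply/unitarymxP.
by rewrite -/(adjmx _) adjmx_tens tensmx_mul PU QU tensmx11.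
Qed.

Lemma unitary_conj_tens n m (P : 'M[C]_n) (Q : 'M[C]_m) X Y :
  adjmx (P *t Q) *m (X *t Y) *m (P *t Q) = (adjmx P *m X *m P) *t (adjmx Q *m Y *m Q).
Proof. by rewrite adjmx_tens !tensmx_mul. Qed.

Lemma mxtrace_ptrB n m (A : 'M[C]_n) (X : 'M[C]_(n * m)) :
  \tr (X *m (A *t 1%:M)) = \tr (A *m ptrB X).
Proof.
rewrite mxtrace_mulC /mxtrace big_mxtens_index; apply: eq_bigr => i _.
have row_i j : ((A *t 1%:M) *m X) (mxtens_index (i, j)) (mxtens_index (i, j))
    = \sum_i' A i i' * X (mxtens_index (i', j)) (mxtens_index (i, j)).
  rewrite mxE big_mxtens_index; apply: eq_bigr => i' _.
  rewrite (bigD1 j) //= tensmxE mxE eqxx mulr1 big1 ?addr0 // => j' /negbTE j'j.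
  by rewrite tensmxE mxE eq_sym j'j mulr0 mul0r.
under eq_bigr => j _ do rewrite row_i.
rewrite mxE; under [RHS]eq_bigr => i' _ do rewrite mxE mulr_sumr.
by rewrite [RHS]exchange_big.
Qed.

Definition diagR n (a : 'I_n -> R) : 'M[C]_n := diag_mx (\row_i (a i)%:C).

Definition conj_diag n (P : 'M[C]_n) (a : 'I_n -> R) : 'M[C]_n :=
  adjmx P *m diagR a *m P.

(* [funm] uses the decomposition picked by [spectralmx]; by [map_diag_conj] any
   other unitary diagonalization gives the same matrix. *)
Lemma funm_conj_diag (f : R -> R) n (P : 'M[C]_n) (a : 'I_n -> R) :
  P \is unitarymx -> funm f (conj_diag P a) = conj_diag P (fun i => f (a i)).
Proof.
move=> PU; rewrite /conj_diag /diagR.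
have <- : invmx P = adjmx P by exact: invmx_unitary.
set A := _ *m _ *m P.
have /orthomx_spectralP spA : A \is normalmx.
  by apply/orthomx_spectral_subproof; exists (P, \row_i (a i)%:C).
rewrite /funm (map_diag_conj _ (spectral_unit A) (unitarymx_unit PU) (esym spA)).
by congr (_ *m diag_mx _ *m _); apply/rowP => i; rewrite !mxE.
Qed.

Lemma hermsymmx_conj_diag n (H : 'M[C]_n) : H \is hermsymmx ->
  exists P a, P \is unitarymx /\ H = conj_diag P a.
Proof.
move=> Hh; have /orthomx_spectralP spH := hermitian_normalmx Hh.
have PU := spectral_unitarymx H.
exists (spectralmx H), (fun i => complex.Re (spectral_diag H 0 i)).
split; first exact: PU.
rewrite /conj_diag /diagR {1}spH.
have <- : invmx (spectralmx H) = adjmx (spectralmx H) by exact: invmx_unitary.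
congr (_ *m diag_mx _ *m _); apply/rowP => i.
have /mxOverP/(_ 0 i) real_i := hermitian_spectral_diag_real Hh.
by rewrite mxE RRe_real.
Qed.

Lemma conj_diagZ c n (P : 'M[C]_n) (a : 'I_n -> R) :
  c%:C *: conj_diag P a = conj_diag P (fun i => c * a i).
Proof.
rewrite /conj_diag scalemxAl scalemxAr; congr (_ *m _ *m _).
by apply/matrixP => i j; rewrite !mxE mulrnAr rmorphM.
Qed.

Lemma mxtrace_conj_diag n (P : 'M[C]_n) (a : 'I_n -> R) :
  P \is unitarymx -> \tr (conj_diag P a) = (\sum_i a i)%:C.
Proof.
move=> PU; rewrite mxtrace_unitary_conj // mxtrace_diag rmorph_sum.
by apply: eq_bigr => i _; rewrite mxE.
Qed.

Lemma conj_diagM n (P : 'M[C]_n) (a b : 'I_n -> R) : P \is unitarymx ->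
  conj_diag P a *m conj_diag P b = conj_diag P (fun i => a i * b i).
Proof.
move=> PU; rewrite unitary_conjM // /diagR mulmx_diag.
by congr (_ *m diag_mx _ *m _); apply/rowP => i; rewrite !mxE rmorphM.
Qed.

Lemma conj_diag_affine n (P : 'M[C]_n) (a : 'I_n -> R) c d : P \is unitarymx ->
  conj_diag P (fun i => c * a i + d) = c%:C *: conj_diag P a + d%:C *: 1%:M.
Proof.
move=> PU; rewrite /conj_diag.
have -> : diagR (fun i => c * a i + d) = c%:C *: diagR a + d%:C *: 1%:M.
  apply/matrixP => i j; rewrite !mxE.
  by case: eqP => _; rewrite /= ?mulr1n ?mulr0n ?mulr0 ?mulr1 ?addr0 ?rmorphD ?rmorphM.
by rewrite mulmxDr mulmxDl -!scalemxAr -!scalemxAl mulmx1 unitarymx_adjK.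
Qed.

Lemma unitary_conj_diag n (W P : 'M[C]_n) (a : 'I_n -> R) :
  adjmx W *m conj_diag P a *m W = conj_diag (P *m W) a.
Proof. by rewrite /conj_diag adjmx_mul !mulmxA. Qed.

Lemma tens_conj_diag n m (P : 'M[C]_n) (Q : 'M[C]_m) (a : 'I_n -> R) (b : 'I_m -> R) :
  conj_diag P a *t conj_diag Q b
  = conj_diag (P *t Q) (fun k => a (mxtens_unindex k).1 * b (mxtens_unindex k).2).
Proof.
rewrite /conj_diag -unitary_conj_tens; congr (_ *m _ *m _).
apply/matrixP => k l.
case: (mxtens_indexP k) => i j; case: (mxtens_indexP l) => i' j'.
rewrite tensmxE !mxE !mxtens_indexK /= eq_mxtens_index.
by case: eqP => _; case: eqP => _; rewrite /= ?mulr1n ?mulr0n ?mulr0 ?mul0r ?rmorphM.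
Qed.

Lemma conj_diag_tensD n m (P : 'M[C]_n) (Q : 'M[C]_m) (a : 'I_n -> R) (b : 'I_m -> R) :
  P \is unitarymx -> Q \is unitarymx ->
  conj_diag (P *t Q) (fun k => a (mxtens_unindex k).1 + b (mxtens_unindex k).2)
  = conj_diag P a *t 1%:M + 1%:M *t conj_diag Q b.
Proof.
move=> PU QU; rewrite /conj_diag.
have -> : diagR (fun k => a (mxtens_unindex k).1 + b (mxtens_unindex k).2)
    = diagR a *t 1%:M + 1%:M *t diagR b.
  apply/matrixP => k l.
  case: (mxtens_indexP k) => i j; case: (mxtens_indexP l) => i' j'.
  rewrite !mxE !mxtens_indexK /= eq_mxtens_index.
  by case: eqP => _; case: eqP => _;
    rewrite /= ?mulr1n ?mulr0n ?mulr0 ?mul0r ?mulr1 ?mul1r ?addr0 ?add0r ?rmorphD.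
by rewrite mulmxDr mulmxDl !unitary_conj_tens !mulmx1 !unitarymx_adjK.
Qed.

Lemma mln_conj_diag n (P : 'M[C]_n) (a : 'I_n -> R) :
  P \is unitarymx -> mln (conj_diag P a) = conj_diag P (fun i => ln (a i)).
Proof. exact: funm_conj_diag. Qed.

Lemma mln_tens n m (P : 'M[C]_n) (Q : 'M[C]_m) (a : 'I_n -> R) (b : 'I_m -> R) :
  P \is unitarymx -> Q \is unitarymx -> (forall i, 0 < a i) -> (forall j, 0 < b j) ->
  mln (conj_diag P a *t conj_diag Q b)
  = mln (conj_diag P a) *t 1%:M + 1%:M *t mln (conj_diag Q b).
Proof.
move=> PU QU a_gt0 b_gt0.
rewrite tens_conj_diag !mln_conj_diag ?tensmx_unitary // -conj_diag_tensD //.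
by congr conj_diag; apply: funext => k; rewrite lnM ?posrE.
Qed.

Lemma mln_unitary_conj n (W P : 'M[C]_n) (a : 'I_n -> R) :
  W \is unitarymx -> P \is unitarymx ->
  mln (adjmx W *m conj_diag P a *m W) = adjmx W *m mln (conj_diag P a) *m W.
Proof.
move=> WU PU.
by rewrite !unitary_conj_diag !mln_conj_diag ?mul_unitarymx // unitary_conj_diag.
Qed.

Lemma mxtrace_mul_mln_conj_diag n (P : 'M[C]_n) (p : 'I_n -> R) : P \is unitarymx ->
  \tr (conj_diag P p *m mln (conj_diag P p)) = (\sum_i p i * ln (p i))%:C.
Proof. by move=> PU; rewrite mln_conj_diag // conj_diagM // mxtrace_conj_diag. Qed.

Lemma mxtrace_mul_mln_unitary_conj_tens n m (W : 'M[C]_(n * m))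
    (P : 'M[C]_n) (Q : 'M[C]_m) (a : 'I_n -> R) (b : 'I_m -> R) :
  W \is unitarymx -> P \is unitarymx -> Q \is unitarymx ->
  (forall i, 0 < a i) -> (forall j, 0 < b j) -> \sum_i a i = 1 -> \sum_j b j = 1 ->
  \tr ((adjmx W *m (conj_diag P a *t conj_diag Q b) *m W)
       *m mln (adjmx W *m (conj_diag P a *t conj_diag Q b) *m W))
  = \tr (conj_diag P a *m mln (conj_diag P a))
    + \tr (conj_diag Q b *m mln (conj_diag Q b)).
Proof.
move=> WU PU QU a_gt0 b_gt0 a_sum1 b_sum1.
rewrite tens_conj_diag mln_unitary_conj ?tensmx_unitary // -tens_conj_diag mln_tens //.
rewrite unitary_conjM // mxtrace_unitary_conj // mulmxDr !tensmx_mul !mulmx1.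
by rewrite mxtraceD !mxtrace_tens !mxtrace_conj_diag // a_sum1 b_sum1 mulr1 mul1r.
Qed.

Lemma trRD n (A B : 'M[C]_n) : trR (A + B) = trR A + trR B.
Proof. by rewrite /trR mxtraceD raddfD. Qed.

Lemma trR_sum I (r : seq I) (P : pred I) n (F : I -> 'M[C]_n) :
  trR (\sum_(i <- r | P i) F i) = \sum_(i <- r | P i) trR (F i).
Proof. by elim/big_rec2: _ => [|i x A _ <-]; rewrite ?trRD // /trR mxtrace0. Qed.

Lemma trRZ n c (A : 'M[C]_n) : trR (c%:C *: A) = c * trR A.
Proof. by rewrite /trR mxtraceZ; case: (\tr A) => x y /=; rewrite mul0r subr0. Qed.

Lemma trR_mulC n (A B : 'M[C]_n) : trR (A *m B) = trR (B *m A).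
Proof. by rewrite /trR mxtrace_mulC. Qed.

Section Gibbs.
Variable beta : R.

Lemma partZ_conj_diag n (P : 'M[C]_n) (a : 'I_n -> R) : P \is unitarymx ->
  partZ beta (conj_diag P a) = \sum_i expR (- beta * a i).
Proof.
by move=> PU; rewrite /partZ /mexp conj_diagZ funm_conj_diag // /trR mxtrace_conj_diag.
Qed.

Lemma gibbs_conj_diag n (P : 'M[C]_n) (a : 'I_n -> R) : P \is unitarymx ->
  gibbs beta (conj_diag P a)
  = conj_diag P (fun i => expR (- beta * a i) / partZ beta (conj_diag P a)).
Proof.
move=> PU; rewrite {1}/gibbs /mexp conj_diagZ funm_conj_diag // conj_diagZ.
by congr conj_diag; apply: funext => i; rewrite mulrC.
Qed.

Lemma partZ_gt0 n (H : 'M[C]_n) : (0 < n)%N -> H \is hermsymmx -> 0 < partZ beta H.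
Proof.
move=> n0 /hermsymmx_conj_diag[P [a [PU ->]]].
by rewrite partZ_conj_diag //; apply: psumr_gt0 => // i; apply: expR_gt0.
Qed.

Lemma gibbs_density n (H : 'M[C]_n) : (0 < n)%N -> H \is hermsymmx ->
  exists P q, [/\ P \is unitarymx, forall i, 0 < q i, \sum_i q i = 1
                 & gibbs beta H = conj_diag P q].
Proof.
move=> n0 Hh; have Z_gt0 := partZ_gt0 n0 Hh.
case/hermsymmx_conj_diag: Hh Z_gt0 => P [a [PU ->]] Z_gt0.
exists P, (fun i => expR (- beta * a i) / partZ beta (conj_diag P a)); split.
- exact: PU.
- by move=> i; rewrite divr_gt0 ?expR_gt0.
- by rewrite -mulr_suml -(partZ_conj_diag a PU) mulfV ?gt_eqF.
- exact: gibbs_conj_diag.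
Qed.

Lemma trR_gibbs n (H : 'M[C]_n) : (0 < n)%N -> H \is hermsymmx -> trR (gibbs beta H) = 1.
Proof.
move=> n0 /(gibbs_density n0)[P [q [PU _ q_sum1 ->]]].
by rewrite /trR mxtrace_conj_diag // q_sum1.
Qed.

Lemma mln_gibbs n (H : 'M[C]_n) : (0 < n)%N -> H \is hermsymmx ->
  mln (gibbs beta H) = (- beta)%:C *: H + (- ln (partZ beta H))%:C *: 1%:M.
Proof.
move=> n0 Hh; have Z_gt0 := partZ_gt0 n0 Hh.
case/hermsymmx_conj_diag: Hh Z_gt0 => P [a [PU ->]] Z_gt0.
rewrite gibbs_conj_diag // mln_conj_diag // -conj_diag_affine //.
by congr conj_diag; apply: funext => i; rewrite ln_div ?expRK ?posrE ?expR_gt0.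
Qed.

Lemma mln_gibbs_tens n m (HA : 'M[C]_n) (HB : 'M[C]_m) :
  (0 < n)%N -> (0 < m)%N -> HA \is hermsymmx -> HB \is hermsymmx ->
  mln (gibbs beta HA *t gibbs beta HB)
  = (- beta)%:C *: (HA *t 1%:M + 1%:M *t HB)
    + (- (ln (partZ beta HA) + ln (partZ beta HB)))%:C *: 1%:M.
Proof.
move=> n0 m0 HAh HBh.
have [P [p [PU p_gt0 _ tauA]]] := gibbs_density n0 HAh.
have [Q [q [QU q_gt0 _ tauB]]] := gibbs_density m0 HBh.
rewrite tauA tauB mln_tens // -tauA -tauB !mln_gibbs //.
rewrite tensmxDl tensmxDr !tensmxZl !tensmxZr !tensmx11.
by rewrite scalerDr opprD rmorphD scalerDl addrACA.
Qed.

Lemma trR_mul_mln_gibbs n (X H : 'M[C]_n) : (0 < n)%N -> H \is hermsymmx ->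
  trR (X *m mln (gibbs beta H)) = - beta * trR (X *m H) - ln (partZ beta H) * trR X.
Proof.
move=> n0 Hh; rewrite mln_gibbs // mulmxDr -!scalemxAr mulmx1 trRD !trRZ.
by rewrite [- ln _ * _]mulNr.
Qed.

Lemma trR_mul_mln_gibbs_tens n m (X : 'M[C]_(n * m)) (HA : 'M[C]_n) (HB : 'M[C]_m) :
  (0 < n)%N -> (0 < m)%N -> HA \is hermsymmx -> HB \is hermsymmx ->
  trR (X *m mln (gibbs beta HA *t gibbs beta HB))
  = - beta * (trR (X *m (HA *t 1%:M)) + trR (X *m (1%:M *t HB)))
    - (ln (partZ beta HA) + ln (partZ beta HB)) * trR X.
Proof.
move=> n0 m0 HAh HBh.
rewrite mln_gibbs_tens // mulmxDr -!scalemxAr mulmxDr mulmx1 !(trRD, trRZ).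
by rewrite [- (_ + _) * _]mulNr.
Qed.

Lemma gibbs_weights_entropy n (Z : R) (E : 'I_n -> R) : 0 < Z ->
  \sum_i expR (- beta * E i) / Z = 1 ->
  \sum_i expR (- beta * E i) / Z * ln (expR (- beta * E i) / Z)
  = - beta * \sum_i expR (- beta * E i) / Z * E i - ln Z.
Proof.
move=> Z_gt0 sum1.
have -> : ln Z = \sum_i expR (- beta * E i) / Z * ln Z.
  by rewrite -mulr_suml sum1 mul1r.
rewrite mulr_sumr -sumrB; apply: eq_bigr => i _.
by rewrite ln_div ?expRK ?posrE ?expR_gt0 //; ring.
Qed.

Lemma expR_free_energy_diff n m (H0 : 'M[C]_n) (Ht : 'M[C]_m) :
  beta != 0 -> 0 < partZ beta H0 -> 0 < partZ beta Ht ->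
  expR (- beta * (freeEnergy beta Ht - freeEnergy beta H0))
  = partZ beta Ht / partZ beta H0.
Proof.
move=> beta_neq0 Z0_gt0 Zt_gt0; rewrite /freeEnergy.
have -> : - beta * (- beta^-1 * ln (partZ beta Ht) - - beta^-1 * ln (partZ beta H0))
    = ln (partZ beta Ht) - ln (partZ beta H0) by field.
by rewrite expRD expRN !lnK ?posrE.
Qed.

Lemma sum_boltzmann_expR_work n (Z Q : R) (eps E : 'I_n -> R) :
  \sum_i expR (- beta * eps i) / Z * expR (- beta * (E i - eps i - Q))
  = expR (beta * Q) * (\sum_i expR (- beta * E i)) / Z.
Proof.
rewrite mulr_sumr mulr_suml; apply: eq_bigr => i _.
rewrite mulrAC -expRD; congr (_ / Z).
by rewrite -expRD; congr expR; ring.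
Qed.

End Gibbs.

Definition basis_mx n (e : 'I_n -> 'cV[C]_n) : 'M[C]_n := \matrix_(r, i) e i r 0.

Lemma basis_mx_adj_unitary n (e : 'I_n -> 'cV[C]_n) :
  (forall i j, adjmx (e i) *m e j = ((i == j)%:R)%:M) ->
  adjmx (basis_mx e) \is unitarymx.
Proof.
move=> e_on; apply/unitarymxP; rewrite -/(adjmx _) adjmxK.
apply/matrixP => i j; move/matrixP/(_ 0 0): (e_on i j).
by rewrite !mxE eqxx mulr1n => <-; apply: eq_bigr => r _; rewrite !mxE.
Qed.

Lemma sum_ketbra n (e : 'I_n -> 'cV[C]_n) (p : 'I_n -> R) :
  \sum_i (p i)%:C *: ketbra (e i) = conj_diag (adjmx (basis_mx e)) p.
Proof.
rewrite /conj_diag adjmxK; apply/matrixP => r s; rewrite summxE mxE.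
apply: eq_bigr => i _; rewrite !mxE big_ord1 !mxE (bigD1 i) //= !mxE eqxx mulr1n.
rewrite big1 ?addr0; first by rewrite mulrCA mulrA.
by move=> k /negbTE ki; rewrite !mxE ki mulr0n mulr0.
Qed.

End FunctionalCalculus.

Section GuessedState.
Variable R : realType.
Local Notation C := R[i].
Variables (beta : R) (n m : nat) (Ht : 'M[C]_n) (HB : 'M[C]_m) (U : 'M[C]_(n * m)).
Variable e : 'I_n -> 'cV[C]_n.
Hypotheses (n_gt0 : (0 < n)%N) (m_gt0 : (0 < m)%N).
Hypotheses (Ht_herm : Ht \is hermsymmx) (HB_herm : HB \is hermsymmx).
Hypothesis U_unitary : U \is unitarymx.
Hypothesis e_orthonormal : forall i j, adjmx (e i) *m e j = ((i == j)%:R)%:M.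

Local Notation E := (Efin beta Ht HB U e).
Local Notation Zs := (Ztil beta Ht HB U e).
Local Notation ThetaSB := (Theta beta Ht HB U e).
Let p i := expR (- beta * E i) / Zs.

Lemma Ztil_gt0 : 0 < Zs.
Proof. by apply: psumr_gt0 => // i; apply: expR_gt0. Qed.

Lemma Theta_weights_sum1 : \sum_i p i = 1.
Proof. by rewrite -mulr_suml mulfV ?gt_eqF ?Ztil_gt0. Qed.

Lemma Theta_tens :
  ThetaSB = U *m (conj_diag (adjmx (basis_mx e)) p *t gibbs beta HB) *m adjmx U.
Proof.
rewrite -sum_ketbra /Theta tensmx_suml mulmx_sumr mulmx_suml; apply: eq_bigr => i _.
by rewrite tensmxZl -scalemxAr -scalemxAl.
Qed.

Lemma trR_Theta_mul_tens1 : trR (ThetaSB *m (Ht *t 1%:M)) = \sum_i p i * E i.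
Proof.
rewrite /Theta mulmx_suml trR_sum; apply: eq_bigr => i _.
by rewrite -scalemxAl trRZ /trR mxtrace_ptrB.
Qed.

Lemma relent_Theta :
  relent ThetaSB (gibbs beta Ht *t gibbs beta HB)
  = ln (partZ beta Ht) - ln Zs - beta * Qtil beta Ht HB U e.
Proof.
have VU := basis_mx_adj_unitary e_orthonormal.
have [Q [q [QU q_gt0 q_sum1 tauB]]] := gibbs_density beta m_gt0 HB_herm.
have p_gt0 i : 0 < p i by rewrite divr_gt0 ?expR_gt0 ?Ztil_gt0.
have ThetaE : ThetaSB = adjmx (adjmx U)
    *m (conj_diag (adjmx (basis_mx e)) p *t conj_diag Q q) *m adjmx U.
  by rewrite Theta_tens tauB adjmxK.
have trR_Theta : trR ThetaSB = 1.
  rewrite ThetaE /trR mxtrace_unitary_conj ?adjmx_unitary // mxtrace_tens.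
  by rewrite !mxtrace_conj_diag // Theta_weights_sum1 q_sum1 mulr1.
have entropy_Theta : trR (ThetaSB *m mln ThetaSB)
    = \sum_i p i * ln (p i) + trR (gibbs beta HB *m mln (gibbs beta HB)).
  rewrite ThetaE /trR (mxtrace_mul_mln_unitary_conj_tens (adjmx_unitary U_unitary))
    ?Theta_weights_sum1 //.
  by rewrite mxtrace_mul_mln_conj_diag // -tauB raddfD.
rewrite /relent entropy_Theta gibbs_weights_entropy ?Ztil_gt0 ?Theta_weights_sum1 //.
rewrite trR_mul_mln_gibbs // trR_gibbs // trR_mul_mln_gibbs_tens // trR_Theta.
rewrite trR_Theta_mul_tens1 /Qtil (trR_mulC (gibbs _ _)) (trR_mulC ThetaSB); lra.
Qed.

End GuessedState.

Unset Implicit Arguments.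

(* n = dim H_S, m = dim H_B; H0 = H_S(0), Ht = H_S(t), HB = H_B, U = U_t;
   e i = |eps_i>, an orthonormal eigenbasis of H0 with eigenvalues eps i. *)
Theorem theorem1 (R : realType) (n m : nat) (beta : R)
  (H0 Ht : 'M[R[i]]_n) (HB : 'M[R[i]]_m) (U : 'M[R[i]]_(n * m))
  (e : 'I_n -> 'cV[R[i]]_n) (eps : 'I_n -> R) :
  (0 < n)%N -> (0 < m)%N -> 0 < beta ->
  H0 \is hermsymmx -> Ht \is hermsymmx -> HB \is hermsymmx ->
  U \is unitarymx ->
  (forall i j : 'I_n, adjmx (e i) *m e j = ((i == j)%:R)%:M) ->
  (forall i : 'I_n, H0 *m e i = (eps i)%:C *: e i) ->
  \sum_(i < n) expR (- beta * eps i) / partZ beta H0 *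
      expR (- beta * Wtil beta Ht HB U e eps i)
  = expR (- beta * (freeEnergy beta Ht - freeEnergy beta H0)) *
    expR (- relent (Theta beta Ht HB U e) (tensmx (gibbs beta Ht) (gibbs beta HB))).
Proof.
move=> n0 m0 beta_gt0 H0h Hth HBh UU e_on _.
have Z0_gt0 := partZ_gt0 beta n0 H0h.
have Zt_gt0 := partZ_gt0 beta n0 Hth.
have Zs_gt0 := Ztil_gt0 beta Ht HB U e n0.
rewrite /Wtil /dEtil sum_boltzmann_expR_work -/(Ztil beta Ht HB U e).
rewrite expR_free_energy_diff ?gt_eqF // relent_Theta //.
set Z0 := partZ beta H0; set Zt := partZ beta Ht.
set Zs := Ztil beta Ht HB U e; set Q := Qtil beta Ht HB U e.
have -> : - (ln Zt - ln Zs - beta * Q) = ln Zs + beta * Q - ln Zt by ring.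
rewrite !expRD expRN !lnK ?posrE //; field.
by rewrite !gt_eqF.
Qed.
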